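(* Let $\mu$ be a joint distribution of a triple $(X,A,Y)$ with $X\in\mathcal{X}\subseteq\mathbb{R}^d$, $A\in\{0,1\}$ with $\Pr(A=0),\Pr(A=1)>0$, and $Y\in[-1,1]$. Let $h:\mathcal{X}\to\mathbb{R}$ be measurable and $\widehat{Y}=h(X)$. If $\widehat{Y}$ is statistically independent of $A$, then $$\varepsilon_{1,\mu_0}(\widehat{Y})+\varepsilon_{1,\mu_1}(\widehat{Y})\geq|\mathbb{E}_{\mu_0}[Y]-\mathbb{E}_{\mu_1}[Y]|$$ and $$\varepsilon^2_{2,\mu_0}(\widehat{Y})+\varepsilon^2_{2,\mu_1}(\widehat{Y})\geq\tfrac{1}{2}|\mathbb{E}_{\mu_0}[Y]-\mathbb{E}_{\mu_1}[Y]|^2.$$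
   Context: For $a\in\{0,1\}$, $\mu_a$ is the conditional distribution of $(X,Y)$ given $A=a$. For a distribution $\nu$ and $p\ge1$, $\varepsilon_{p,\nu}(\widehat{Y}):=\left(\mathbb{E}_\nu[|\widehat{Y}-Y|^p]\right)^{1/p}$. *)

From HB Require Import structures.
From mathcomp Require Import all_boot all_order all_algebra.
From mathcomp Require Import all_classical all_reals all_analysis.
Set Implicit Arguments. Unset Strict Implicit. Unset Printing Implicit Defensive.
Import Order.TTheory GRing.Theory Num.Theory.
Import numFieldNormedType.Exports.
Local Open Scope classical_set_scope.
Local Open Scope ring_scope.

Notation Rd R d := (g_sigma_algebraType (@open 'rV[R]_d)).

Definition indep_rv {dT d1 d2} {T : measurableType dT} {R : realType}
  {T1 : measurableType d1} {T2 : measurableType d2}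
  (P : probability T R) (f : T -> T1) (g : T -> T2) : Prop :=
  forall (B1 : set T1) (B2 : set T2), measurable B1 -> measurable B2 ->
    P (f @^-1` B1 `&` g @^-1` B2) = (P (f @^-1` B1) * P (g @^-1` B2))%E.

Lemma inv_fine_ge0 {dT} {T : measurableType dT} {R : realType}
  (P : probability T R) (D : set T) : 0 <= (fine (P D))^-1.
Proof. by rewrite invr_ge0 fine_ge0 // measure_ge0. Qed.

Lemma measurable_event {dT} {T : measurableType dT} (A : T -> bool)
  (mA : measurable_fun setT A) (a : bool) : measurable (A @^-1` [set a]).
Proof. by rewrite -[_ @^-1` _]setTI; apply: mA. Qed.

(* mu_a : conditional distribution given A = a, i.e.
   S |-> P(S /\ A = a) / P(A = a) (as a measure on the sample space). *)
Definition cond_dist {dT} {T : measurableType dT} {R : realType}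
  (P : probability T R) (A : T -> bool) (mA : measurable_fun setT A) (a : bool)
  : {measure set T -> \bar R} :=
  mscale (NngNum (inv_fine_ge0 P (A @^-1` [set a])))
         (mrestr P (measurable_event mA a)).

Definition eps_err {dT} {T : measurableType dT} {R : realType}
  (p : R) (nu : {measure set T -> \bar R}) (Yhat Y : T -> R) : \bar R :=
  Lnorm nu p%:E (fun w => (Yhat w - Y w)%:E).

Definition expect {dT} {T : measurableType dT} {R : realType}
  (nu : {measure set T -> \bar R}) (Y : T -> R) : \bar R :=
  (\int[nu]_w (Y w)%:E)%E.

From HB Require Import structures.
From mathcomp Require Import all_boot all_order all_algebra.
From mathcomp Require Import all_classical all_reals all_analysis.
From mathcomp Require Import ring lra measurable_realfun.
Import Order.TTheory GRing.Theory Num.Theory.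
Import numFieldNormedType.Exports.
Local Open Scope classical_set_scope.
Local Open Scope ring_scope.

(* Independence of [Yhat] and [A] makes the law of [Yhat] the same under
   [mu_0] and [mu_1], so every bounded function of [Yhat] has one and the same
   mean [c] under both.  Clamping [Yhat] to [[-1, 1]] gives such a function
   without any integrability assumption on [Yhat], and it does not increase
   [|Yhat - Y|] because [Y] takes values in [[-1, 1]].  Hence
   [|c - E_{mu_a}[Y]| <= eps_{1,mu_a} <= eps_{2,mu_a}] for both [a], and the
   two bounds follow from the triangle inequality and
   [(s + t)^2 <= 2 (s^2 + t^2)]. *)

Section clamp.
Context {R : realType}.

Definition clamp (x : R) : R := Order.max (-1) (Order.min x 1).

Lemma clamp_norm_le1 x : `|clamp x| <= 1.
Proof.
rewrite /clamp ler_norml; case: (leP x 1) => hx; case: (leP (-1) x) => hx';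
  rewrite ?max_r ?max_l; try (apply/andP; split); lra.
Qed.

Lemma clamp_dist_le x y : -1 <= y <= 1 -> `|clamp x - y| <= `|x - y|.
Proof.
move=> /andP[y_ge y_le]; rewrite /clamp.
case: (leP x 1) => hx; case: (leP (-1) x) => hx'; rewrite ?max_r ?max_l; try lra.
- by rewrite !ler0_norm; lra.
- by rewrite !ger0_norm; lra.
Qed.

Lemma measurable_clamp : measurable_fun setT clamp.
Proof.
apply: measurable_maxr; first exact: measurable_cst.
by apply: measurable_minr => //; exact: measurable_cst.
Qed.

End clamp.

Section unit_mass_measure.
Context {d} {T : measurableType d} {R : realType} {mu : {measure set T -> \bar R}}.
Hypothesis mu_setT : mu setT = 1%E.

Lemma bounded_integrable {g : T -> R} {M : R} : measurable_fun setT g ->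
  (forall w, `|g w| <= M) -> mu.-integrable setT (fun w => (g w)%:E).
Proof.
move=> mg g_le; apply: measurable_bounded_integrable => //; first by rewrite mu_setT ltry.
by exists M; split; rewrite ?num_real // => x Mx w _; exact: le_trans (g_le w) (ltW Mx).
Qed.

Lemma bounded_integral_fin_num {g : T -> R} {M : R} : measurable_fun setT g ->
  (forall w, `|g w| <= M) -> (\int[mu]_w (g w)%:E)%E \is a fin_num.
Proof. by move=> mg g_le; apply: integrable_fin_num (bounded_integrable mg g_le). Qed.

Context {f Y : T -> R}.
Hypotheses (mf : measurable_fun setT f) (mY : measurable_fun setT Y).

Lemma eps_err1_le_eps_err2 : (eps_err 1 mu f Y <= eps_err 2 mu f Y)%E.
Proof.
have := @hoelder _ _ R mu (fun w => f w - Y w) (cst 1) 2 2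
  (measurable_funB mf mY) (measurable_cst _) (ltr0Sn _ _) (ltr0Sn _ _).
have -> : (2^-1 + 2^-1 = 1 :> R) by field.
move=> /(_ erefl).
have -> : Lnorm mu 2%:E (EFin \o cst 1) = 1%E.
  by rewrite (eq_Lnorm _ _ (g := cst 1%E)) // Lnorm_cst1 mu_setT poweR1r.
rewrite mule1 /eps_err.
by under eq_Lnorm do rewrite /= mulr1.
Qed.

Hypothesis Y_bounded : forall w, -1 <= Y w <= 1.

Let Y_le1 w : `|Y w| <= 1.
Proof. by rewrite ler_norml; have := Y_bounded w; lra. Qed.

Lemma expect_bounded_fin_num : expect mu Y \is a fin_num.
Proof. exact: (bounded_integral_fin_num mY Y_le1). Qed.

Lemma abse_integral_clamp_sub_le :
  (`| \int[mu]_w (clamp (f w))%:E - expect mu Y | <= eps_err 1 mu f Y)%E.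
Proof.
have mclamp : measurable_fun setT (clamp \o f).
  exact: measurableT_comp (@measurable_clamp R) mf.
have iclamp := bounded_integrable mclamp (fun w => clamp_norm_le1 (f w)).
have iY := bounded_integrable mY Y_le1.
rewrite /eps_err Lnorm1 /expect -integralB_EFin //.
have mdiff : measurable_fun setT (fun w => (clamp (f w) - Y w)%:E).
  by apply/measurable_EFinP; exact: measurable_funB.
apply: le_trans (le_abse_integral _ _ mdiff) _ => //.
apply: ge0_le_integral => //.
- exact: measurableT_comp.
- by apply: measurableT_comp => //; apply/measurable_EFinP; exact: measurable_funB.
- by move=> w _; rewrite lee_fin clamp_dist_le.
Qed.

End unit_mass_measure.

Section cond_dist.
Context {dT} {T : measurableType dT} {R : realType} {P : probability T R}
  {A : T -> bool} (mA : measurable_fun setT A) {a : bool}.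
Hypothesis PA_gt0 : (0 < P (A @^-1` [set a]))%E.

Let PA_fin_num : P (A @^-1` [set a]) \is a fin_num.
Proof.
rewrite ge0_fin_numE ?measure_ge0 // (le_lt_trans (probability_le1 _ _)) ?ltry //.
exact: measurable_event.
Qed.

Let fine_PA_neq0 : fine (P (A @^-1` [set a])) != 0.
Proof. by rewrite gt_eqF // fine_gt0 // PA_gt0 -ge0_fin_numE ?ltW. Qed.

Lemma cond_dist_setT : cond_dist P mA a setT = 1%E.
Proof.
rewrite /cond_dist /= /mscale /mrestr /= /mrestr setTI.
by rewrite -[X in (_ * X)%E](fineK PA_fin_num) -EFinM mulVf.
Qed.

Lemma cond_dist_indep_preimage d' (T' : measurableType d') (f : T -> T') (B : set T') :
  indep_rv P f A -> measurable B -> cond_dist P mA a (f @^-1` B) = P (f @^-1` B).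
Proof.
move=> f_indep mB; rewrite /cond_dist /= /mscale /mrestr /= /mrestr f_indep //.
by rewrite -[X in (_ * (_ * X))%E](fineK PA_fin_num) muleC -muleA -EFinM mulfV // mule1.
Qed.

Lemma integral_cond_dist_indep {d'} {T' : measurableType d'} {f : T -> T'}
    {g : T' -> R} {M : R} :
  measurable_fun setT f -> measurable_fun setT g -> (forall y, `|g y| <= M) ->
  indep_rv P f A ->
  (\int[cond_dist P mA a]_w (g (f w))%:E = \int[pushforward P f]_y (g y)%:E)%E.
Proof.
move=> mf mg g_le f_indep.
have mgf : measurable_fun setT (g \o f) by exact: measurableT_comp.
transitivity (\int[pushforward (cond_dist P mA a) f]_y (g y)%:E)%E.
  rewrite integral_pushforward //; first exact/measurable_EFinP.
  by rewrite preimage_setT; exact: (bounded_integrable cond_dist_setT mgf (fun w => g_le (f w))).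
by apply: (eq_measure_integral (pushforward P f)) => B mB _; exact: cond_dist_indep_preimage.
Qed.

End cond_dist.

Section triangle.
Context {R : realFieldType}.

Lemma ler_half_sqr_distD (c x0 x1 : R) :
  2^-1 * (`|x0 - x1| * `|x0 - x1|) <= `|c - x0| * `|c - x0| + `|c - x1| * `|c - x1|.
Proof.
have D_le := ler_distD c x0 x1; rewrite (distrC x0 c) in D_le.
have := ler_pM (normr_ge0 _) (normr_ge0 _) D_le D_le.
have := sqr_ge0 (`|c - x0| - `|c - x1|); rewrite expr2.
nra.
Qed.

Local Open Scope ereal_scope.

Lemma lee_abse_sub_adde (c x0 x1 e0 e1 : \bar R) :
  c \is a fin_num -> x0 \is a fin_num -> x1 \is a fin_num ->
  `|c - x0| <= e0 -> `|c - x1| <= e1 -> `|x0 - x1| <= e0 + e1.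
Proof.
case: c x0 x1 => // c [] // x0 [] // x1 _ _ _; rewrite -!EFinB !abse_EFin => le0 le1.
by apply: le_trans (leeD le0 le1); rewrite -EFinD lee_fin (distrC c) ler_distD.
Qed.

Lemma lee_abse_sub_sqr_adde (c x0 x1 e0 e1 : \bar R) :
  c \is a fin_num -> x0 \is a fin_num -> x1 \is a fin_num ->
  `|c - x0| <= e0 -> `|c - x1| <= e1 ->
  (2^-1)%:E * (`|x0 - x1| * `|x0 - x1|) <= e0 * e0 + e1 * e1.
Proof.
case: c x0 x1 => // c [] // x0 [] // x1 _ _ _; rewrite -!EFinB !abse_EFin => le0 le1.
apply: le_trans (leeD (lee_pmul _ _ le0 le0) (lee_pmul _ _ le1 le1)) => //.
by rewrite -!EFinM -EFinD lee_fin ler_half_sqr_distD.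
Qed.

End triangle.

Theorem corollary1 (dT : measure_display) (T : measurableType dT) (R : realType)
  (P : probability T R) (d : nat) (calX : set (Rd R d))
  (X : T -> Rd R d) (A : T -> bool) (Y : T -> R)
  (mX : measurable_fun setT X) (mA : measurable_fun setT A)
  (mY : measurable_fun setT Y)
  (hXin : forall w, calX (X w))
  (hA0 : (0 < P (A @^-1` [set false]))%E) (hA1 : (0 < P (A @^-1` [set true]))%E)
  (hY : forall w, -1 <= Y w <= 1)
  (h : Rd R d -> R) (mh : measurable_fun setT h)
  (hind : indep_rv P (h \o X) A) :
  let mu0 := cond_dist P mA false in
  let mu1 := cond_dist P mA true in
  (eps_err 1 mu0 (h \o X) Y + eps_err 1 mu1 (h \o X) Y
     >= `| expect mu0 Y - expect mu1 Y |)%E /\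
  (eps_err 2 mu0 (h \o X) Y * eps_err 2 mu0 (h \o X) Y
   + eps_err 2 mu1 (h \o X) Y * eps_err 2 mu1 (h \o X) Y
     >= (2^-1)%:E * (`| expect mu0 Y - expect mu1 Y | * `| expect mu0 Y - expect mu1 Y |))%E.
Proof.
move=> mu0 mu1.
have mhX : measurable_fun setT (h \o X) by exact: measurableT_comp.
have mu0_setT : mu0 setT = 1%E by exact: cond_dist_setT.
have mu1_setT : mu1 setT = 1%E by exact: cond_dist_setT.
have mean_clamp a (PA_gt0 : (0 < P (A @^-1` [set a]))%E) :=
  integral_cond_dist_indep mA PA_gt0 mhX measurable_clamp clamp_norm_le1 hind.
set c : \bar R := (\int[pushforward _ _]_y _)%E in mean_clamp.
have c_fin : c \is a fin_num.
  rewrite -(mean_clamp false hA0).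
  exact: (bounded_integral_fin_num mu0_setT (measurableT_comp measurable_clamp mhX)
    (fun w => clamp_norm_le1 _)).
have E0_fin := expect_bounded_fin_num mu0_setT mY hY.
have E1_fin := expect_bounded_fin_num mu1_setT mY hY.
have le0 : (`|c - expect mu0 Y| <= eps_err 1 mu0 (h \o X) Y)%E.
  by rewrite -(mean_clamp false hA0); exact: abse_integral_clamp_sub_le.
have le1 : (`|c - expect mu1 Y| <= eps_err 1 mu1 (h \o X) Y)%E.
  by rewrite -(mean_clamp true hA1); exact: abse_integral_clamp_sub_le.
split; first exact: lee_abse_sub_adde c_fin E0_fin E1_fin le0 le1.
apply: lee_abse_sub_sqr_adde c_fin E0_fin E1_fin _ _.
- exact: le_trans le0 (eps_err1_le_eps_err2 mu0_setT mhX mY).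
- exact: le_trans le1 (eps_err1_le_eps_err2 mu1_setT mhX mY).
Qed.
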